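(* Let $(J,k_1,\dots,k_J)$ be a permissible decomposition of $Q$ and $A\in I_{J,k_1,\dots,k_J}$. Then there is $\delta>0$ such that for every $B\in I_{J,k_1,\dots,k_J}$ with $\mathcal{G}(A,B)<\delta$, every geodesic $\gamma:[0,1]\to\mathbb{Q}_Q(\mathbb{R}^n)$ from $A$ to $B$ satisfies $\gamma(t)\in I_{J,k_1,\dots,k_J}$ for all $t\in[0,1]$.
   Context: $\mathbb{Q}_Q(\mathbb{R}^n)$ denotes the set of unordered $Q$-tuples of points of $\mathbb{R}^n$, written $\sum_{i=1}^Q[[a_i]]$ (two such sums are equal iff the tuples agree up to a permutation; $k[[a]]$ means $k$ copies of $a$), with metric $\mathcal{G}\big(\sum_i[[a_i]],\sum_i[[b_i]]\big)=\min_{\sigma}\big(\sum_{i}|a_i-b_{\sigma(i)}|^2\big)^{1/2}$ over permutations $\sigma$. A permissible decomposition of $Q$ is a tuple $(J,k_1,\dots,k_J)$ of positive integers with $k_1\le\dots\le k_J$ and $\sum_i k_i=Q$. Every $x$ can be written uniquely as $x=\sum_{i=1}^J k_i[[x_i]]$ with $x_1,\dots,x_J$ distinct and $k_1\le\dots\le k_J$; its signature is $S(x)=(J,k_1,\dots,k_J)$, and $I_{J,k_1,\dots,k_J}=\{x:S(x)=(J,k_1,\dots,k_J)\}$. A geodesic from $A$ to $B$ is a curve $\gamma:[0,1]\to\mathbb{Q}_Q(\mathbb{R}^n)$ with $\gamma(0)=A$, $\gamma(1)=B$ and $\mathcal{G}(\gamma(s),\gamma(t))=|t-s|\,\mathcal{G}(A,B)$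 for all $s,t$. *)

From HB Require Import structures.
From mathcomp Require Import all_boot all_order all_algebra all_fingroup.
From mathcomp Require Import reals.
Set Implicit Arguments. Unset Strict Implicit. Unset Printing Implicit Defensive.
Import Order.TTheory GRing.Theory Num.Theory.
Local Open Scope ring_scope.

(* Points of Q_Q(R^n) are represented by ordered Q-tuples of points of R^n
   (row vectors); all notions below are invariant under permutations of the
   tuple, so they are notions on the unordered Q-tuples. *)
Definition Qpt (R : realType) (Q n : nat) := 'I_Q -> 'rV[R]_n.

Definition sqnorm (R : realType) (n : nat) (v : 'rV[R]_n) : R :=
  \sum_(j < n) (v 0 j) ^+ 2.

Definition Qeq (R : realType) (Q n : nat) (x y : Qpt R Q n) : Prop :=
  exists s : 'S_Q, forall i, x i = y (s i).

Definition Gcost (R : realType) (Q n : nat) (x y : Qpt R Q n) (s : 'S_Q) : R :=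
  \sum_(i < Q) sqnorm (x i - y (s i)).

Definition Gdist (R : realType) (Q n : nat) (x y : Qpt R Q n) : R :=
  Num.sqrt (\big[Num.min/Gcost x y 1%g]_(s : 'S_Q) Gcost x y s).

(* signature S(x) = (J, k_1, ..., k_J), encoded as the nondecreasing list
   [:: k_1; ...; k_J] of multiplicities of the distinct points (J = its size) *)
Definition signature (R : realType) (Q n : nat) (x : Qpt R Q n) : seq nat :=
  sort leq [seq #|[set i : 'I_Q | x i == y]| | y <- undup [seq x i | i <- enum 'I_Q]].

(* permissible decomposition (J, k_1, ..., k_J) of Q, encoded as [:: k_1; ...; k_J] *)
Definition permissible (Q : nat) (ks : seq nat) : Prop :=
  [/\ (0 < size ks)%N, all (fun k => 0 < k)%N ks, sorted leq ks & sumn ks = Q].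

Definition inI (R : realType) (Q n : nat) (ks : seq nat) (x : Qpt R Q n) : Prop :=
  signature x = ks.

Definition geodesic (R : realType) (Q n : nat) (A B : Qpt R Q n)
  (g : R -> Qpt R Q n) : Prop :=
  [/\ Qeq (g 0) A, Qeq (g 1) B &
      forall s t, 0 <= s <= 1 -> 0 <= t <= 1 ->
        Gdist (g s) (g t) = `|t - s| * Gdist A B].

(* Distinct points of A are at squared distance at least m > 0.  Along a
   geodesic from A to B every point is, up to relabelling, the pointwise
   interpolation (1-t) a_i + t b_(sg i) of representatives of A and B along an
   optimal matching sg: this is the equality case of the triangle inequality.
   If G(A, B)^2 < m/4, each b_(sg i) lies within half the separation of A from
   a_i, so the interpolation cannot merge distinct points of A; and since B has
   as many distinct points as A, it cannot split equal ones either.  Hence every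
   point of the geodesic has the same coincidences, so the same signature, as A. *)
From HB Require Import structures.
From mathcomp Require Import all_boot all_order all_algebra all_fingroup.
From mathcomp Require Import reals ring lra.
Import Order.TTheory GRing.Theory Num.Theory.
Local Open Scope ring_scope.

Section Kernel.
Context {I : finType} {T1 T2 : eqType}.

Lemma undup_map_inj_in {f : T1 -> T2} {s : seq T1} :
  {in s &, injective f} -> undup (map f s) = map f (undup s).
Proof.
elim: s => //= a s IH inj.
have inj' : {in s &, injective f}.
  by move=> u v us vs; apply: inj; rewrite inE ?us ?vs orbT.
have -> : (f a \in map f s) = (a \in s).
  apply/mapP/idP => [[b bs fab]|]; last by move=> ?; exists a.
  by rewrite (inj a b) // ?inE ?eqxx ?bs ?orbT.
by case: ifP => _ /=; rewrite IH.
Qed.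

Lemma uniq_map_inj_in {f : T1 -> T2} {s : seq T1} :
  uniq (map f s) -> {in s &, injective f}.
Proof.
elim: s => //= a s IH /andP[fa us] u v; rewrite !inE.
case/orP=> [/eqP->|us']; case/orP=> [/eqP->|vs'] // E.
- by move: fa; rewrite E map_f.
- by move: fa; rewrite -E map_f.
- exact: IH.
Qed.

Lemma ker_factor (x0 : T2) {x : I -> T2} {y : I -> T1} :
  (forall i j, y i = y j -> x i = x j) -> exists h : T1 -> T2, forall i, h (y i) = x i.
Proof.
move=> Hyx; pose e := enum I.
exists (fun v => nth x0 (map x e) (index v (map y e))) => i.
have Hi : y i \in map y e by rewrite map_f ?mem_enum.
rewrite (nth_map i) -?(size_map y) ?index_mem //; apply: Hyx.
by rewrite -(nth_map i (y i)) -?(size_map y) ?index_mem // nth_index.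
Qed.

Lemma ker_eq_of_size_undup {x : I -> T2} {y : I -> T1} :
  (forall i j, y i = y j -> x i = x j) ->
  size (undup (map y (enum I))) = size (undup (map x (enum I))) ->
  forall i j, x i = x j -> y i = y j.
Proof.
move=> Hyx Hsize i j Hx; have [h hy] := ker_factor (x i) Hyx.
pose e := enum I.
have Uh : uniq (map h (undup (map y e))).
  apply: (leq_size_uniq (undup_uniq (map x e))); last by rewrite size_map Hsize.
  move=> v; rewrite mem_undup => /mapP[k _ ->]; rewrite -hy.
  by rewrite map_f // mem_undup map_f // mem_enum.
by apply: (uniq_map_inj_in Uh); rewrite ?mem_undup ?map_f ?mem_enum // !hy.
Qed.

End Kernel.

Section Signature.
Context {R : realType} {Q n : nat}.
Implicit Types x y : Qpt R Q n.

Lemma signature_perm x (s : 'S_Q) : signature (fun i => x (s i)) = signature x.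
Proof.
rewrite /signature; apply/perm_sortP; [exact: leq_total|exact: leq_trans|exact: anti_leq|].
have card_perm v : #|[set i | x (s i) == v]| = #|[set i | x i == v]|.
  rewrite -[RHS](card_preimset _ (@perm_inj _ s)).
  by apply: eq_card => i; rewrite !inE.
rewrite (eq_map card_perm); apply/perm_map/perm_undup => v.
apply/mapP/mapP => -[i _ ->]; first by exists (s i); rewrite ?mem_enum.
by exists ((s^-1)%g i); rewrite ?mem_enum // permKV.
Qed.

Lemma signature_ker x y : (forall i j, (x i == x j) = (y i == y j)) ->
  signature x = signature y.
Proof.
move=> Hxy; have [h hx] : exists h, forall i, h (x i) = y i.
  by apply: (ker_factor (0 : 'rV[R]_n)) => i j /eqP; rewrite Hxy => /eqP.
rewrite /signature.
have -> : [seq y i | i <- enum 'I_Q] = map h [seq x i | i <- enum 'I_Q].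
  by rewrite -[RHS]map_comp; apply: eq_map => i /=; rewrite hx.
rewrite (undup_map_inj_in (f := h)); last first.
  by move=> u v /mapP[i _ ->] /mapP[j _ ->]; rewrite !hx => /eqP; rewrite -Hxy => /eqP.
rewrite -[in RHS]map_comp; congr (sort _ _); apply/eq_in_map => v.
rewrite mem_undup => /mapP[k _ ->] /=; rewrite hx.
by apply: eq_card => i; rewrite !inE Hxy.
Qed.

Lemma signature_Qeq {x y} : Qeq x y -> signature x = signature y.
Proof.
case=> s Hs; rewrite -(signature_perm y s).
by apply: signature_ker => i j; rewrite !Hs.
Qed.

Lemma eq_signature {x y} : x =1 y -> signature x = signature y.
Proof. by move=> Exy; apply: signature_ker => i j; rewrite !Exy. Qed.

Lemma size_signature x : size (signature x) = size (undup (map x (enum 'I_Q))).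
Proof. by rewrite size_sort size_map. Qed.

End Signature.

Section TriangleEquality.
Context {R : realFieldType} {I : finType}.
Implicit Types U V : I -> R.

Lemma sum_sqr_expand U V (al be : R) :
  \sum_k (al * U k + be * V k) ^+ 2 =
  al ^+ 2 * \sum_k U k ^+ 2 + 2 * al * be * \sum_k U k * V k + be ^+ 2 * \sum_k V k ^+ 2.
Proof. by rewrite !mulr_sumr -!big_split; apply: eq_bigr => k _ /=; ring. Qed.

Lemma sum_sqr_triangle_eq {U V} {t D : R} : 0 <= t <= 1 ->
  \sum_k U k ^+ 2 = t ^+ 2 * D -> \sum_k V k ^+ 2 = (1 - t) ^+ 2 * D ->
  D <= \sum_k (U k + V k) ^+ 2 ->
  (forall k, U k = t * (U k + V k)) /\ \sum_k (U k + V k) ^+ 2 = D.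
Proof.
move=> /andP[t0 t1] SU SV SW.
have sum_sqr11 : \sum_k (U k + V k) ^+ 2 =
    \sum_k U k ^+ 2 + 2 * \sum_k U k * V k + \sum_k V k ^+ 2.
  by rewrite mulr_sumr -!big_split; apply: eq_bigr => k _ /=; ring.
have sum_sqr_diff := sum_sqr_expand U V (1 - t) (- t).
have diff0 : \sum_k ((1 - t) * U k + - t * V k) ^+ 2 = 0.
  apply/eqP; rewrite eq_le sumr_ge0 ?andbT => [|k _]; last exact: sqr_ge0.
  rewrite sum_sqr_diff SU SV; rewrite sum_sqr11 SU SV in SW.
  have : 0 <= t * (1 - t) by rewrite mulr_ge0 ?subr_ge0.
  nra.
have U_eq k : U k = t * (U k + V k).
  have := psumr_eq0P (fun k _ => sqr_ge0 _) diff0 (i := k) isT.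
  by move/eqP; rewrite sqrf_eq0 => /eqP ?; nra.
split=> //; set W := \sum_k _ in SW *.
have EU : \sum_k U k ^+ 2 = t ^+ 2 * W.
  by rewrite /W mulr_sumr; apply: eq_bigr => k _; rewrite {1}U_eq exprMn.
have EV : \sum_k V k ^+ 2 = (1 - t) ^+ 2 * W.
  rewrite /W mulr_sumr; apply: eq_bigr => k _.
  by rewrite -exprMn; congr (_ ^+ 2); have := U_eq k; lra.
rewrite EU in SU; rewrite EV in SV; nra.
Qed.

End TriangleEquality.

Section Geodesics.
Context {R : realType} {Q n : nat}.
Implicit Types (x y : Qpt R Q n) (s : 'S_Q) (u v : 'rV[R]_n).

Lemma sqnorm_ge0 v : 0 <= sqnorm v.
Proof. by apply: sumr_ge0 => j _; rewrite sqr_ge0. Qed.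

Lemma sqnorm_eq0 v : sqnorm v = 0 -> v = 0.
Proof.
move=> v0; apply/matrixP => i j; rewrite ord1 mxE; apply/eqP.
by rewrite -sqrf_eq0; apply/eqP/(psumr_eq0P _ v0) => // k _; rewrite sqr_ge0.
Qed.

Lemma sqnormZ (t : R) v : sqnorm (t *: v) = t ^+ 2 * sqnorm v.
Proof. by rewrite /sqnorm mulr_sumr; apply: eq_bigr => j _; rewrite mxE exprMn. Qed.

Lemma sqnormB_le u v : sqnorm (u - v) <= 2 * sqnorm u + 2 * sqnorm v.
Proof.
rewrite /sqnorm !mulr_sumr -big_split /=; apply: ler_sum => j _.
rewrite !mxE -subr_ge0 (_ : _ - _ = (u 0 j + v 0 j) ^+ 2); [exact: sqr_ge0|ring].
Qed.

Lemma sum_sqnorm_pair (F : 'I_Q -> 'rV[R]_n) :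
  \sum_i sqnorm (F i) = \sum_(p : 'I_Q * 'I_n) F p.1 0 p.2 ^+ 2.
Proof. by rewrite -(pair_big predT predT (fun i j => F i 0 j ^+ 2)). Qed.

Lemma sqnorm_le_Gcost x y s i : sqnorm (x i - y (s i)) <= Gcost x y s.
Proof.
by rewrite /Gcost (bigD1 i) //= lerDl sumr_ge0 // => k _; apply: sqnorm_ge0.
Qed.

Lemma sqr_Gdist_le x y s : Gdist x y ^+ 2 <= Gcost x y s.
Proof.
rewrite /Gdist sqr_sqrtr ?bigmin_le //.
by apply: le_bigmin => [|s' _]; apply: sumr_ge0 => i _; apply: sqnorm_ge0.
Qed.

Lemma sqr_Gdist_attained x y : exists s, Gdist x y ^+ 2 = Gcost x y s.
Proof.
rewrite /Gdist sqr_sqrtr; last first.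
  by apply: le_bigmin => [|s _]; apply: sumr_ge0 => i _; apply: sqnorm_ge0.
apply: (big_ind (fun r => exists s, r = Gcost x y s)) => [|_ _ [s ->] [s' ->]|s _].
- by exists 1%g.
- by rewrite /Num.min; case: ifP => _; [exists s|exists s'].
- by exists s.
Qed.

(* Both optimal matchings a -> c -> b compose to a matching a -> b whose cost
   meets the lower bound, which forces equality in the triangle inequality. *)
Lemma Gdist_collinear (a b c : Qpt R Q n) (t D2 : R) : 0 <= t <= 1 ->
  Gdist a c ^+ 2 = t ^+ 2 * D2 -> Gdist c b ^+ 2 = (1 - t) ^+ 2 * D2 ->
  Gdist a b ^+ 2 = D2 ->
  exists s sg, Gcost a b sg = D2 /\
    forall i, c (s i) = (1 - t) *: a i + t *: b (sg i).
Proof.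
move=> Ht Hac Hcb Hab.
have [s Hs] := sqr_Gdist_attained a c; have [s' Hs'] := sqr_Gdist_attained c b.
pose sg := (s * s')%g; exists s, sg.
pose U (p : 'I_Q * 'I_n) := a p.1 0 p.2 - c (s p.1) 0 p.2.
pose V (p : 'I_Q * 'I_n) := c (s p.1) 0 p.2 - b (sg p.1) 0 p.2.
have SU : \sum_p U p ^+ 2 = t ^+ 2 * D2.
  by rewrite -Hac Hs /Gcost sum_sqnorm_pair; apply: eq_bigr => p _; rewrite !mxE.
have SV : \sum_p V p ^+ 2 = (1 - t) ^+ 2 * D2.
  rewrite -Hcb Hs' /Gcost (reindex_inj (@perm_inj _ s)) sum_sqnorm_pair.
  by apply: eq_bigr => p _; rewrite /V /sg permM !mxE.
have SW : \sum_p (U p + V p) ^+ 2 = Gcost a b sg.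
  rewrite /Gcost sum_sqnorm_pair; apply: eq_bigr => p _.
  by rewrite /U /V !mxE addrA subrK.
have [U_eq W_eq] := sum_sqr_triangle_eq Ht SU SV ltac:(by rewrite SW -Hab sqr_Gdist_le).
split=> [|i]; first by rewrite -SW.
apply/matrixP => k j; rewrite ord1 !mxE.
by have := U_eq (i, j); rewrite /U /V /=; lra.
Qed.

Lemma geodesic_interpolation {A B : Qpt R Q n} {g : R -> Qpt R Q n} {t : R} :
  geodesic A B g -> 0 <= t <= 1 ->
  exists s sg, Gcost (g 0) (g 1) sg = Gdist A B ^+ 2 /\
    forall i, g t (s i) = (1 - t) *: g 0 i + t *: g 1 (sg i).
Proof.
case=> _ _ Hg Ht; have /andP[t0 t1] := Ht.
have I0 : 0 <= (0 : R) <= 1 by rewrite lexx ler01.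
have I1 : 0 <= (1 : R) <= 1 by rewrite lexx ler01.
apply: Gdist_collinear; rewrite // Hg // exprMn.
- by rewrite subr0 ger0_norm.
- by rewrite ger0_norm // subr_ge0.
- by rewrite subr0 normr1 expr1n mul1r.
Qed.

Lemma exists_sqnorm_separation x :
  exists2 m : R, 0 < m & forall i j, x i != x j -> m <= sqnorm (x i - x j).
Proof.
exists (\big[Num.min/1]_(p : 'I_Q * 'I_Q | x p.1 != x p.2) sqnorm (x p.1 - x p.2)).
  apply: (big_ind (fun r => 0 < r)) => // [r r' r0 r0'|p Hp]; first by rewrite lt_min r0 r0'.
  rewrite lt_neqAle sqnorm_ge0 andbT eq_sym; apply: contra Hp => /eqP/sqnorm_eq0/eqP.
  by rewrite subr_eq0.
by move=> i j Hij; apply: (bigmin_le_cond _ (j := (i, j))).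
Qed.

(* Equal interpolants force [u - v = t *: ((u - u') - (v - v'))], whose squared
   length is at most [4 e]. *)
Lemma interpolate_neq u v u' v' (e t : R) :
  4 * e < sqnorm (u - v) -> sqnorm (u - u') <= e -> sqnorm (v - v') <= e ->
  0 <= t <= 1 -> (1 - t) *: u + t *: u' != (1 - t) *: v + t *: v'.
Proof.
move=> Huv Hu Hv /andP[t0 t1]; apply/negP => /eqP E.
have Euv : u - v = t *: ((u - u') - (v - v')).
  apply/matrixP => i j; move/matrixP: E => /(_ i j); rewrite !mxE; lra.
move: Huv; rewrite Euv sqnormZ.
have := sqnormB_le (u - u') (v - v'); have := sqnorm_ge0 ((u - u') - (v - v')).
set S := sqnorm _ => S0 SB.
have : t ^+ 2 * S <= S by rewrite ler_piMl // expr_le1.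
lra.
Qed.

Lemma signature_interpolate {a y : Qpt R Q n} {e t : R} :
  (forall i j, a i != a j -> 4 * e < sqnorm (a i - a j)) ->
  (forall i, sqnorm (a i - y i) <= e) -> signature y = signature a -> 0 <= t <= 1 ->
  signature (fun i => (1 - t) *: a i + t *: y i) = signature a.
Proof.
move=> sep close sig_ya Ht.
have split_a i j : a i != a j -> (1 - t) *: a i + t *: y i != (1 - t) *: a j + t *: y j.
  by move=> Hij; apply: interpolate_neq (sep i j Hij) (close i) (close j) Ht.
have ker_ya i j : y i = y j -> a i = a j.
  move=> Ey; apply/eqP; apply: contraLR (introT eqP Ey) => /(sep i j) Hij.
  have := interpolate_neq _ _ _ _ _ 1 Hij (close i) (close j).
  by rewrite subrr !scale0r !add0r !scale1r; apply; rewrite lexx ler01.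
have ker_ay : forall i j, a i = a j -> y i = y j.
  by apply: (ker_eq_of_size_undup ker_ya); rewrite -!size_signature sig_ya.
apply: signature_ker => i j; case: (eqVneq (a i) (a j)) => [Ea|/split_a /negbTE //].
by rewrite Ea (ker_ay _ _ Ea) !eqxx.
Qed.

End Geodesics.

Theorem theorem3p12 (R : realType) (Q n : nat) (ks : seq nat) (A : Qpt R Q n) :
  permissible Q ks -> inI ks A ->
  exists2 delta : R, 0 < delta &
    forall B : Qpt R Q n, inI ks B -> Gdist A B < delta ->
    forall g : R -> Qpt R Q n, geodesic A B g ->
    forall t : R, 0 <= t <= 1 -> inI ks (g t).
Proof.
move=> _ HA; have [m m0 sepA] := exists_sqnorm_separation A.
exists (Num.min 1 (m / 4)) => [|B HB HD g geo t Ht]; first by rewrite lt_min ltr01 divr_gt0.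
have [s [sg [Hcost Hc]]] := geodesic_interpolation geo Ht.
have [Ha Hb _] := geo; have [pa Ea] := Ha.
have small : 4 * Gdist A B ^+ 2 < m.
  have D0 : 0 <= Gdist A B by apply: sqrtr_ge0.
  move: HD; rewrite lt_min => /andP[D1 Dm]; nra.
rewrite /inI -(signature_perm (g t) s) (eq_signature Hc).
rewrite (signature_interpolate (e := Gdist A B ^+ 2)) //.
- by rewrite (signature_Qeq Ha).
- by move=> i j; rewrite !Ea => /sepA; apply: lt_le_trans.
- by move=> i; rewrite -Hcost sqnorm_le_Gcost.
- by rewrite (signature_perm (g 1) sg) (signature_Qeq Hb) (signature_Qeq Ha) HA HB.
Qed.
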